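(* Let $\mathsf{CS}$ be a constant specification for $\mathsf{LPC}^+$. For every set of formulas $T$ and formula $\phi$: if $T\models_{\mathsf{LPC}^+_{\mathsf{CS}}}\phi$, then $T\vdash_{\mathsf{LPC}^+_{\mathsf{CS}}}\phi$.
   Context: Language: countable sets $\mathsf{Const}$, $\mathsf{Var}$, $\mathsf{Prop}$; terms $t ::= c \mid x \mid t\cdot t \mid t+t \mid\ !t$; formulas $\phi ::= p \mid \neg\phi \mid \phi\wedge\phi \mid \phi\supset\phi \mid \phi>\phi \mid t{:}\phi$; $\mathsf{Tm},\mathsf{Fm}$ the sets of terms and formulas. Axiom schemes of $\mathsf{LPC}^+$: (A1) all instances of classical tautologies; (A2) $(\phi>(\psi\supset\chi))\supset((\phi>\psi)\supset(\phi>\chi))$; (A3) $\phi>\phi$; (A4) $(\phi>\psi)\supset(\phi\supset\psi)$; (A5) $(s{:}(\phi>\psi)\wedge t{:}\phi) > (s\cdot t){:}\psi$; (A6) $s{:}\phi > (s+t){:}\phi$; (A7) $t{:}\phi>(s+t){:}\phi$; (A8) $t{:}\phi>\phi$; (A9) $t{:}\phi > (!t){:}t{:}\phi$. A constant specification $\mathsf{CS}$ is a set of $c{:}\phi$ with $c\in\mathsf{Const}$, $\phi$ an instance of (A1)–(A9). $\mathsf{LPC}^+_{\mathsf{CS}}$: axioms (A1)–(A9) and $\mathsf{CS}$; rules (MP) from $\phi,\phi\supset\psi$ infer $\psi$, and (RCN) from $\psi$ infer $\phi>\psi$. For a set $T$: $T\vdash\phi$ iff $\vdash(\psi_1\wedge\cdots\wedge\psi_n)\supset\phi$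 for some $\psi_1,\dots,\psi_n\in T$, $n\ge0$. Relational models $\mathcal M=(W,W_N,R_{Fm},R_{Tm},V)$: $W$ nonempty, $W_N\subseteq W$ nonempty (normal states); $R_\phi\subseteq W_N\times W_N$ for each formula $\phi$; $R_t\subseteq W\times W$ for each term $t$; $V(w)\subseteq\mathsf{Prop}$ for $w\in W_N$, $V(w)\subseteq\mathsf{Fm}$ for $w\in W\setminus W_N$. Truth: at non-normal $w$, $w\models\phi$ iff $\phi\in V(w)$; at normal $w$: $p$ iff $p\in V(w)$, $\neg,\wedge,\supset$ classical, $\phi>\psi$ iff $R_\phi(w)\subseteq[\psi]$, $t{:}\phi$ iff $R_t(w)\subseteq[\phi]$, with $[\phi]=\{w\in W: w\models\phi\}$. An $\mathsf{LPC}^+_{\mathsf{CS}}$-model is a relational model such that for all $w\in W_N$: (1) $R_\phi(w)\subseteq[\phi]$ for all $\phi$; (2) if $w\in[\phi]$ then $w\in R_\phi(w)$; (3) $R_c(w)\subseteq[\phi]$ for each $c{:}\phi\in\mathsf{CS}$; (4) $R_{s+t}(w)\subseteq R_s(w)\cap R_t(w)$; (5) for all $v\in R_{s\cdot t}(w)$ and all $\phi,\psi$: if $w\in[s{:}(\phi>\psi)\wedge t{:}\phi]$ then $v\in[\psi]$; (6) $wR_tw$ for all $t$; (7) for all $t$ and $v,u\in W$, if $wR_{!t}v$ and $vR_tu$ then $wR_tu$. $T\models_{\mathsf{LPC}^+_{\mathsf{CS}}}\phi$ iff for every $\mathsf{LPC}^+_{\mathsf{CS}}$-model and every $w\in W_N$,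 if every member of $T$ is true at $w$ then $\phi$ is true at $w$. *)

From Stdlib Require Import List.
Import ListNotations.

(* Const, Var, Prop are countable sets: represented by nat. *)
Definition Const := nat.
Definition Var := nat.
Definition PropVar := nat.

Inductive Tm : Type :=
| TConst : Const -> Tm
| TVar : Var -> Tm
| TApp : Tm -> Tm -> Tm
| TPlus : Tm -> Tm -> Tm
| TBang : Tm -> Tm.

Inductive Fm : Type :=
| FAtom : PropVar -> Fm
| FNeg : Fm -> Fm
| FAnd : Fm -> Fm -> Fm
| FImp : Fm -> Fm -> Fm
| FCond : Fm -> Fm -> Fm
| FJust : Tm -> Fm -> Fm.

Inductive PFm : Type :=
| PVar : nat -> PFm
| PNeg : PFm -> PFm
| PAnd : PFm -> PFm -> PFm
| PImp : PFm -> PFm -> PFm.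

Fixpoint peval (v : nat -> bool) (A : PFm) : bool :=
  match A with
  | PVar n => v n
  | PNeg A => negb (peval v A)
  | PAnd A B => andb (peval v A) (peval v B)
  | PImp A B => orb (negb (peval v A)) (peval v B)
  end.

Definition tautology (A : PFm) : Prop := forall v, peval v A = true.

Fixpoint psubst (s : nat -> Fm) (A : PFm) : Fm :=
  match A with
  | PVar n => s n
  | PNeg A => FNeg (psubst s A)
  | PAnd A B => FAnd (psubst s A) (psubst s B)
  | PImp A B => FImp (psubst s A) (psubst s B)
  end.

Definition taut_instance (phi : Fm) : Prop :=
  exists A s, tautology A /\ phi = psubst s A.

Inductive IsAxiom : Fm -> Prop :=
| A1 : forall phi, taut_instance phi -> IsAxiom phi
| A2 : forall phi psi chi,
    IsAxiom (FImp (FCond phi (FImp psi chi))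
                (FImp (FCond phi psi) (FCond phi chi)))
| A3 : forall phi, IsAxiom (FCond phi phi)
| A4 : forall phi psi, IsAxiom (FImp (FCond phi psi) (FImp phi psi))
| A5 : forall s t phi psi,
    IsAxiom (FCond (FAnd (FJust s (FCond phi psi)) (FJust t phi))
                 (FJust (TApp s t) psi))
| A6 : forall s t phi, IsAxiom (FCond (FJust s phi) (FJust (TPlus s t) phi))
| A7 : forall s t phi, IsAxiom (FCond (FJust t phi) (FJust (TPlus s t) phi))
| A8 : forall t phi, IsAxiom (FCond (FJust t phi) phi)
| A9 : forall t phi, IsAxiom (FCond (FJust t phi) (FJust (TBang t) (FJust t phi))).

Definition ConstSpec (CS : Fm -> Prop) : Prop :=
  forall chi, CS chi -> exists c phi, chi = FJust (TConst c) phi /\ IsAxiom phi.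

Inductive Prov (CS : Fm -> Prop) : Fm -> Prop :=
| P_ax : forall phi, IsAxiom phi -> Prov CS phi
| P_cs : forall phi, CS phi -> Prov CS phi
| P_mp : forall phi psi, Prov CS phi -> Prov CS (FImp phi psi) -> Prov CS psi
| P_rcn : forall phi psi, Prov CS psi -> Prov CS (FCond phi psi).

(* T |- phi : |- (psi_1 /\ ... /\ psi_n) -> phi for some psi_i in T, n >= 0;
   for n = 0 this means |- phi. *)
Definition bigconj (psi0 : Fm) (l : list Fm) : Fm := fold_left FAnd l psi0.

Definition derives (CS : Fm -> Prop) (T : Fm -> Prop) (phi : Fm) : Prop :=
  Prov CS phi \/
  exists psi0 l, T psi0 /\ (forall psi, In psi l -> T psi) /\
                 Prov CS (FImp (bigconj psi0 l) phi).

Record RModel : Type := {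
  W : Type;
  WN : W -> Prop;
  Rf : Fm -> W -> W -> Prop;
  Rt : Tm -> W -> W -> Prop;
  Vp : W -> PropVar -> Prop;         (* V(w) subset Prop, for normal w *)
  Vf : W -> Fm -> Prop               (* V(w) subset Fm, for non-normal w *)
}.

Fixpoint sat (M : RModel) (w : W M) (phi : Fm) : Prop :=
  (WN M w ->
     match phi with
     | FAtom p => Vp M w p
     | FNeg a => ~ sat M w a
     | FAnd a b => sat M w a /\ sat M w b
     | FImp a b => sat M w a -> sat M w b
     | FCond a b => forall v, Rf M a w v -> sat M v b
     | FJust t a => forall v, Rt M t w v -> sat M v a
     end) /\
  (~ WN M w -> Vf M w phi).

Definition is_relational_model (M : RModel) : Prop :=
  (exists w, WN M w) /\
  (forall phi w v, Rf M phi w v -> WN M w /\ WN M v).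

Definition is_LPC_model (CS : Fm -> Prop) (M : RModel) : Prop :=
  is_relational_model M /\
  forall w, WN M w ->
    (forall phi v, Rf M phi w v -> sat M v phi) /\
    (forall phi, sat M w phi -> Rf M phi w w) /\
    (forall c phi, CS (FJust (TConst c) phi) ->
                 forall v, Rt M (TConst c) w v -> sat M v phi) /\
    (forall s t v, Rt M (TPlus s t) w v -> Rt M s w v /\ Rt M t w v) /\
    (forall s t v phi psi, Rt M (TApp s t) w v ->
                 sat M w (FAnd (FJust s (FCond phi psi)) (FJust t phi)) ->
                 sat M v psi) /\
    (forall t, Rt M t w w) /\
    (forall t v u, Rt M (TBang t) w v -> Rt M t v u -> Rt M t w u).

Definition entails (CS : Fm -> Prop) (T : Fm -> Prop) (phi : Fm) : Prop :=
  forall M : RModel, is_LPC_model CS M ->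
    forall w, WN M w -> (forall psi, T psi -> sat M w psi) -> sat M w phi.

(* Derivability from a set satisfies the deduction
   theorem, so every consistent set extends to a maximal consistent one
   (Lindenbaum, along an enumeration of the countably many formulas).  The normal
   worlds of the canonical model are the maximal consistent sets; v is an
   R_a-successor of w when a ∈ v and every b with a > b ∈ w lies in v.  If
   a > b ∉ w such a successor avoiding b exists, because the set of conditional
   consequences of a in w is closed under derivation (A2, RCN) and contains a (A3).
   The R_t-successors of w are w itself and non-normal worlds, where truth is
   membership: the world {b | t:b ∈ w} witnesses t:b ∉ w, and A8 handles the
   reflexive step.  Non-normal worlds have no successors, so the frame conditions
   reduce to A4-A9 and CS at normal worlds; in particular (7) is immediate. *)

From Stdlib Require Import List Classical ClassicalEpsilon Cantor.
Import ListNotations.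

Definition top : Fm := FImp (FAtom 0) (FAtom 0).
Definition bot : Fm := FNeg top.

Lemma prov_tautology CS (A : PFm) (s : nat -> Fm) : tautology A -> Prov CS (psubst s A).
Proof. intros HA; apply P_ax, A1; exists A, s; auto. Qed.

(* [tautology] proves [Prov CS f] for an instance [f] of a classical tautology:
   maximal non-propositional subformulas of [f] become propositional variables and
   the resulting propositional formula is checked by truth tables. *)
Ltac atom_index x atoms :=
  lazymatch atoms with
  | x :: _ => constr:(0)
  | _ :: ?rest => let n := atom_index x rest in constr:(S n)
  end.

Ltac insert_atom x atoms :=
  lazymatch atoms with
  | [] => constr:([x])
  | x :: _ => atoms
  | ?y :: ?rest => let rest' := insert_atom x rest in constr:(y :: rest')
  end.

Ltac collect_atoms f atoms :=
  lazymatch f with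
  | FNeg ?a => collect_atoms a atoms
  | FAnd ?a ?b => let atoms' := collect_atoms a atoms in collect_atoms b atoms'
  | FImp ?a ?b => let atoms' := collect_atoms a atoms in collect_atoms b atoms'
  | _ => insert_atom f atoms
  end.

Ltac reify f atoms :=
  lazymatch f with
  | FNeg ?a => let A := reify a atoms in constr:(PNeg A)
  | FAnd ?a ?b => let A := reify a atoms in let B := reify b atoms in constr:(PAnd A B)
  | FImp ?a ?b => let A := reify a atoms in let B := reify b atoms in constr:(PImp A B)
  | _ => let n := atom_index f atoms in constr:(PVar n)
  end.

Ltac tautology :=
  unfold bot, top;
  lazymatch goal with
  | |- Prov ?CS ?f =>
      let atoms := collect_atoms f (@nil Fm) in
      let A := reify f atoms in
      apply (prov_tautology CS A (fun n => nth n atoms (FAtom 0)));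
      let v := fresh "v" in
      intro v; simpl;
      repeat match goal with |- context [v ?n] => destruct (v n) end;
      reflexivity
  end.

Definition pair_code (a b : nat) : nat := to_nat (a, b).

Lemma pair_code_inj a b c d : pair_code a b = pair_code c d -> a = c /\ b = d.
Proof. intros H. injection (to_nat_inj _ _ H). auto. Qed.

Fixpoint code_Tm (t : Tm) : nat :=
  match t with
  | TConst c => pair_code 0 c
  | TVar x => pair_code 1 x
  | TApp s u => pair_code 2 (pair_code (code_Tm s) (code_Tm u))
  | TPlus s u => pair_code 3 (pair_code (code_Tm s) (code_Tm u))
  | TBang s => pair_code 4 (code_Tm s)
  end.

Fixpoint code_Fm (f : Fm) : nat :=
  match f with
  | FAtom p => pair_code 0 p
  | FNeg a => pair_code 1 (code_Fm a)
  | FAnd a b => pair_code 2 (pair_code (code_Fm a) (code_Fm b))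
  | FImp a b => pair_code 3 (pair_code (code_Fm a) (code_Fm b))
  | FCond a b => pair_code 4 (pair_code (code_Fm a) (code_Fm b))
  | FJust t a => pair_code 5 (pair_code (code_Tm t) (code_Fm a))
  end.

Ltac invert_pair_codes :=
  repeat match goal with
         | H : pair_code _ _ = pair_code _ _ |- _ => apply pair_code_inj in H as [? ?]
         end.

Lemma code_Tm_inj t u : code_Tm t = code_Tm u -> t = u.
Proof.
  revert u; induction t; destruct u; cbn [code_Tm]; intros H; invert_pair_codes;
    try discriminate; f_equal; auto.
Qed.

Lemma code_Fm_inj f g : code_Fm f = code_Fm g -> f = g.
Proof.
  revert g; induction f; destruct g; cbn [code_Fm]; intros H; invert_pair_codes;
    try discriminate; f_equal; auto using code_Tm_inj.
Qed.

Definition enum_Fm (n : nat) : Fm := epsilon (inhabits (FAtom 0)) (fun f => code_Fm f = n).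

Lemma enum_Fm_code p : enum_Fm (code_Fm p) = p.
Proof.
  apply code_Fm_inj.
  exact (epsilon_spec (inhabits (FAtom 0)) (fun f => code_Fm f = code_Fm p) (ex_intro _ p eq_refl)).
Qed.

Section Derivability.

Variable CS : Fm -> Prop.

Lemma prov_imp_trans a b c : Prov CS (FImp a b) -> Prov CS (FImp b c) -> Prov CS (FImp a c).
Proof.
  intros Hab Hbc. apply (P_mp CS _ _ Hbc), (P_mp CS _ _ Hab). tautology.
Qed.

Definition add (G : Fm -> Prop) (a : Fm) : Fm -> Prop := fun x => G x \/ x = a.

Inductive Der (G : Fm -> Prop) : Fm -> Prop :=
| der_prov p : Prov CS p -> Der G p
| der_hyp p : G p -> Der G p
| der_mp a b : Der G a -> Der G (FImp a b) -> Der G b.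

Lemma der_mono (G G' : Fm -> Prop) p :
  (forall x, G x -> G' x) -> Der G p -> Der G' p.
Proof. intros HGG'; induction 1; eauto using Der. Qed.

Lemma der_prov_imp G a b : Der G a -> Prov CS (FImp a b) -> Der G b.
Proof. eauto using Der. Qed.

Lemma der_prov_imp2 G a b c :
  Der G a -> Der G b -> Prov CS (FImp a (FImp b c)) -> Der G c.
Proof. eauto using Der. Qed.

Theorem deduction G a p : Der (add G a) p -> Der G (FImp a p).
Proof.
  induction 1 as [p Hp|p [Hp| ->]|b c _ IHb _ IHbc].
  - apply (der_prov_imp G p); [now constructor | tautology].
  - apply (der_prov_imp G p); [now constructor | tautology].
  - constructor. tautology.
  - apply (der_prov_imp2 G _ _ _ IHb IHbc). tautology.
Qed.

Lemma der_chain_union (C : nat -> Fm -> Prop) p :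
  (forall n m x, n <= m -> C n x -> C m x) ->
  Der (fun x => exists n, C n x) p -> exists n, Der (C n) p.
Proof.
  intros Hmono. induction 1 as [p Hp|p [n Hn]|a b _ [n Ha] _ [m Hab]].
  - exists 0. now constructor.
  - exists n. now constructor.
  - exists (max n m). apply (der_mp _ a).
    + revert Ha. apply der_mono. intro. apply Hmono. apply PeanoNat.Nat.le_max_l.
    + revert Hab. apply der_mono. intro. apply Hmono. apply PeanoNat.Nat.le_max_r.
Qed.

Fixpoint conj_list (l : list Fm) : Fm :=
  match l with [] => top | x :: l => FAnd x (conj_list l) end.

Lemma prov_conj_list_app l1 l2 :
  Prov CS (FImp (conj_list (l1 ++ l2)) (FAnd (conj_list l1) (conj_list l2))).
Proof.
  induction l1 as [|a l1 IH]; simpl.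
  - tautology.
  - apply (P_mp CS _ _ IH). tautology.
Qed.

Lemma der_finite G p :
  Der G p -> exists l, (forall x, In x l -> G x) /\ Prov CS (FImp (conj_list l) p).
Proof.
  induction 1 as [p Hp|p Hp|a b _ [l1 [Hl1 Ha]] _ [l2 [Hl2 Hab]]].
  - exists []. split; [intros x []|]. apply (P_mp CS _ _ Hp). tautology.
  - exists [p]. split; [intros x [<-|[]]; exact Hp|]. simpl. tautology.
  - exists (l1 ++ l2). split.
    + intros x Hx. apply in_app_or in Hx as [Hx|Hx]; auto.
    + apply (prov_imp_trans _ _ _ (prov_conj_list_app l1 l2)).
      apply (P_mp CS _ _ Hab), (P_mp CS _ _ Ha). tautology.
Qed.

Lemma prov_bigconj_conj_list p l : Prov CS (FImp (bigconj p l) (conj_list (p :: l))).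
Proof.
  revert p; induction l as [|y l IH]; intro p; simpl.
  - tautology.
  - apply (prov_imp_trans _ _ _ (IH (FAnd p y))). simpl. tautology.
Qed.

Lemma derives_of_der T phi : Der T phi -> derives CS T phi.
Proof.
  intros Hd. destruct (der_finite T phi Hd) as [[|x l] [Hl Hp]].
  - left. exact (P_mp CS top phi ltac:(tautology) Hp).
  - right. exists x, l.
    repeat split; [apply Hl; left; reflexivity | intros; apply Hl; right; assumption |].
    exact (prov_imp_trans _ _ _ (prov_bigconj_conj_list x l) Hp).
Qed.

Definition consistent (G : Fm -> Prop) : Prop := ~ Der G bot.

Definition MCS (G : Fm -> Prop) : Prop := consistent G /\ forall p, G p \/ G (FNeg p).

Lemma consistent_add_or_add_neg G a :
  consistent G -> consistent (add G a) \/ consistent (add G (FNeg a)).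
Proof.
  intros HG. apply NNPP. intros [Ha Hna]%not_or_and.
  apply NNPP, deduction in Ha. apply NNPP, deduction in Hna.
  apply HG, (der_prov_imp2 G _ _ _ Ha Hna). tautology.
Qed.

Lemma consistent_add_neg G p : ~ Der G p -> consistent (add G (FNeg p)).
Proof.
  intros Hp Hd. apply Hp, (der_prov_imp G _ _ (deduction G _ _ Hd)). tautology.
Qed.

Section MaximalConsistent.

Variable G : Fm -> Prop.
Hypothesis HG : MCS G.

Lemma mcs_der p : Der G p -> G p.
Proof.
  intros Hp. destruct (proj2 HG p) as [|Hnp]; [assumption|].
  exfalso. apply (proj1 HG), (der_prov_imp2 G _ _ _ Hp (der_hyp G _ Hnp)). tautology.
Qed.

Lemma mcs_prov p : Prov CS p -> G p.
Proof. intros; apply mcs_der; now constructor. Qed.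

Lemma mcs_mp a b : G (FImp a b) -> G a -> G b.
Proof. intros Hab Ha. apply mcs_der, (der_mp G a); now constructor. Qed.

Lemma mcs_prov_imp a b : Prov CS (FImp a b) -> G a -> G b.
Proof. intros Hab. apply mcs_mp, mcs_prov, Hab. Qed.

Lemma mcs_neg p : G (FNeg p) <-> ~ G p.
Proof.
  split.
  - intros Hnp Hp. apply (proj1 HG), (der_prov_imp2 G p (FNeg p)); try now constructor.
    tautology.
  - intros Hp. now destruct (proj2 HG p).
Qed.

Lemma mcs_and a b : G (FAnd a b) <-> G a /\ G b.
Proof.
  split.
  - intros Hab. split; [apply (mcs_prov_imp (FAnd a b) a)|apply (mcs_prov_imp (FAnd a b) b)];
      (assumption || tautology).
  - intros [Ha Hb]. apply (mcs_mp b), Hb. apply (mcs_prov_imp a), Ha. tautology.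
Qed.

Lemma mcs_imp a b : G (FImp a b) <-> (G a -> G b).
Proof.
  split; [apply mcs_mp|]. intros Hab.
  destruct (proj2 HG a) as [Ha|Hna].
  - apply (mcs_prov_imp b), Hab, Ha. tautology.
  - apply (mcs_prov_imp (FNeg a)), Hna. tautology.
Qed.

Lemma mcs_ax p : IsAxiom p -> G p.
Proof. intros Hp. apply mcs_prov, P_ax, Hp. Qed.

Lemma mcs_cond_K a b c : G (FCond a (FImp b c)) -> G (FCond a b) -> G (FCond a c).
Proof. intros Habc. apply mcs_mp, (mcs_mp _ _ (mcs_ax _ (A2 a b c)) Habc). Qed.

Lemma mcs_cond_der a b : Der (fun c => G (FCond a c)) b -> G (FCond a b).
Proof.
  induction 1 as [b Hb|b Hb|b c _ IHb _ IHbc].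
  - apply mcs_prov, P_rcn, Hb.
  - exact Hb.
  - exact (mcs_cond_K a b c IHbc IHb).
Qed.

Lemma mcs_cond_mp a b : G (FCond a b) -> G a -> G b.
Proof. intros Hab. apply mcs_mp, (mcs_mp _ _ (mcs_ax _ (A4 a b)) Hab). Qed.

Lemma mcs_just_factive t a : G (FJust t a) -> G a.
Proof. apply mcs_cond_mp, mcs_ax, A8. Qed.

End MaximalConsistent.

Definition lindenbaum_step (n : nat) (G : Fm -> Prop) : Fm -> Prop :=
  if excluded_middle_informative (consistent (add G (enum_Fm n)))
  then add G (enum_Fm n) else add G (FNeg (enum_Fm n)).

Fixpoint lindenbaum_chain (G : Fm -> Prop) (n : nat) : Fm -> Prop :=
  match n with 0 => G | S n => lindenbaum_step n (lindenbaum_chain G n) end.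

Lemma lindenbaum_chain_mono G n m x :
  n <= m -> lindenbaum_chain G n x -> lindenbaum_chain G m x.
Proof.
  intros Hnm Hx. induction Hnm as [|m _ IH]; [exact Hx|].
  simpl. unfold lindenbaum_step. destruct excluded_middle_informative; left; exact IH.
Qed.

Lemma lindenbaum_chain_consistent G n : consistent G -> consistent (lindenbaum_chain G n).
Proof.
  intros HG. induction n as [|n IH]; [exact HG|]. simpl. unfold lindenbaum_step.
  destruct excluded_middle_informative as [Hc|Hc]; [exact Hc|].
  destruct (consistent_add_or_add_neg _ (enum_Fm n) IH); tauto.
Qed.

Lemma lindenbaum G : consistent G -> exists D, MCS D /\ forall x, G x -> D x.
Proof.
  intros HG. exists (fun x => exists n, lindenbaum_chain G n x). repeat split.
  - intros Hbot. apply der_chain_union in Hbot as [n Hn]; [|apply lindenbaum_chain_mono].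
    exact (lindenbaum_chain_consistent G n HG Hn).
  - intros p. rewrite <- (enum_Fm_code p). set (n := code_Fm p).
    assert (Hstep : lindenbaum_chain G (S n) (enum_Fm n) \/
                    lindenbaum_chain G (S n) (FNeg (enum_Fm n))).
    { simpl. unfold lindenbaum_step. destruct excluded_middle_informative;
        [left|right]; right; reflexivity. }
    destruct Hstep; [left|right]; eexists; eassumption.
  - intros x Hx. now exists 0.
Qed.

Lemma mcs_not_cond_witness G a b : MCS G -> ~ G (FCond a b) ->
  exists D, MCS D /\ D a /\ ~ D b /\ forall c, G (FCond a c) -> D c.
Proof.
  intros HG Hab.
  set (G0 := fun c => G (FCond a c)).
  assert (HC : consistent (add (add G0 a) (FNeg b))).
  { intros Hd. apply deduction, deduction in Hd.
    apply Hab, (mcs_cond_K G HG a a b).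
    - apply (mcs_cond_der G HG), (der_prov_imp G0 _ _ Hd). tautology.
    - apply (mcs_ax G HG), A3. }
  destruct (lindenbaum _ HC) as [D [HD HsubD]].
  exists D. split; [exact HD|]. repeat split.
  - apply HsubD. left. right. reflexivity.
  - apply (mcs_neg D HD), HsubD. right. reflexivity.
  - intros c Hc. apply HsubD. left. left. exact Hc.
Qed.

End Derivability.

Definition sat_at_normal (M : RModel) (w : W M) (phi : Fm) : Prop :=
  match phi with
  | FAtom p => Vp M w p
  | FNeg a => ~ sat M w a
  | FAnd a b => sat M w a /\ sat M w b
  | FImp a b => sat M w a -> sat M w b
  | FCond a b => forall v, Rf M a w v -> sat M v b
  | FJust t a => forall v, Rt M t w v -> sat M v a
  end.

Lemma sat_normal M w phi : WN M w -> (sat M w phi <-> sat_at_normal M w phi).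
Proof. intros Hw. destruct phi; simpl; tauto. Qed.

Lemma sat_abnormal M w phi : ~ WN M w -> (sat M w phi <-> Vf M w phi).
Proof. intros Hw. destruct phi; simpl; tauto. Qed.

Section CanonicalModel.

Variable CS : Fm -> Prop.

Definition world : Type := ((Fm -> Prop) * bool)%type.

Definition normal (w : world) : Prop := snd w = true /\ MCS CS (fst w).

Definition canonical_model : RModel := {|
  W := world;
  WN := normal;
  Rf := fun a w v => normal w /\ normal v /\ fst v a /\
                     forall b, fst w (FCond a b) -> fst v b;
  Rt := fun t w v => normal w /\
                     (v = w \/ (snd v = false /\ forall b, fst w (FJust t b) -> fst v b));
  Vp := fun w p => fst w (FAtom p);
  Vf := fun w a => fst w a |}.

Lemma canonical_Rt_just t a (w v : world) :
  Rt canonical_model t w v -> fst w (FJust t a) -> fst v a.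
Proof.
  intros [[_ HG] [->|[_ Hv]]] Hta; [exact (mcs_just_factive CS _ HG t a Hta) | exact (Hv a Hta)].
Qed.

Lemma truth_lemma phi : forall w, sat canonical_model w phi <-> fst w phi.
Proof.
  induction phi as [p|a IHa|a IHa b IHb|a IHa b IHb|a IHa b IHb|t a IHa]; intros w;
    (destruct (classic (normal w)) as [Hw|Hw];
     [rewrite (sat_normal canonical_model w _ Hw); pose proof (proj2 Hw) as HG; simpl
     |now rewrite (sat_abnormal canonical_model w _ Hw)]).
  - reflexivity.
  - rewrite IHa. symmetry. apply (mcs_neg CS _ HG).
  - rewrite IHa, IHb. symmetry. apply (mcs_and CS _ HG).
  - rewrite IHa, IHb. symmetry. apply (mcs_imp CS _ HG).
  - split.
    + intros Hsat. apply NNPP. intros Hab.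
      destruct (mcs_not_cond_witness CS _ a b HG Hab) as [D [HD [HDa [HDb HGD]]]].
      apply HDb, (IHb (D, true)), Hsat.
      exact (conj Hw (conj (conj eq_refl HD) (conj HDa HGD))).
    + intros Hab v [_ [_ [_ Hv]]]. apply IHb, Hv, Hab.
  - split.
    + intros Hsat. apply (IHa (fun b => fst w (FJust t b), false)), Hsat.
      split; [exact Hw|]. right. split; [reflexivity|]. now intros b.
    + intros Hta v Hr. apply IHa, (canonical_Rt_just t a w v Hr Hta).
Qed.

Theorem canonical_model_is_LPC_model D : MCS CS D -> is_LPC_model CS canonical_model.
Proof.
  intros HD. split.
  { split; [now exists (D, true)|]. intros phi w v [Hw [Hv _]]. now split. }
  intros w Hw. pose proof (proj2 Hw) as HG.
  split; [|split; [|split; [|split; [|split; [|split]]]]].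
  - intros phi v [_ [_ [Hv _]]]. now apply truth_lemma.
  - intros phi Hphi%truth_lemma. split; [exact Hw|]. split; [exact Hw|]. split; [exact Hphi|].
    intros b Hb. exact (mcs_cond_mp CS _ HG _ _ Hb Hphi).
  - intros c phi Hc v Hr. apply truth_lemma, (canonical_Rt_just (TConst c) phi w v Hr).
    apply (mcs_prov CS _ HG), P_cs, Hc.
  - intros s t v [_ [->|[Hv Hsub]]].
    + split; split; auto.
    + split; (split; [exact Hw|right; split; [exact Hv|]]); intros b Hb; apply Hsub;
        refine (mcs_cond_mp CS _ HG _ _ _ Hb); apply (mcs_ax CS _ HG); [apply A6|apply A7].
  - intros s t v phi psi Hr Hst%truth_lemma. apply truth_lemma, (canonical_Rt_just _ _ w v Hr).
    exact (mcs_cond_mp CS _ HG _ _ (mcs_ax CS _ HG _ (A5 s t phi psi)) Hst).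
  - intros t. split; [exact Hw|left; reflexivity].
  - intros t v u [_ [->|[Hv _]]] Hvu; [exact Hvu|].
    destruct Hvu as [[Hv' _] _]. congruence.
Qed.

End CanonicalModel.

Theorem mainTheorem10 (CS : Fm -> Prop) (HCS : ConstSpec CS)
  (T : Fm -> Prop) (phi : Fm) :
  entails CS T phi -> derives CS T phi.
Proof.
  intros Hent. apply derives_of_der, NNPP. intros Hnot.
  destruct (lindenbaum CS _ (consistent_add_neg CS T phi Hnot)) as [D [HD HTD]].
  assert (Hw : normal CS (D, true)) by (split; [reflexivity | exact HD]).
  assert (Hphi : D phi).
  { apply (truth_lemma CS phi (D, true)).
    apply (Hent _ (canonical_model_is_LPC_model CS D HD) _ Hw).
    intros psi Hpsi. apply truth_lemma, HTD. left. exact Hpsi. }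
  apply (mcs_neg CS D HD phi) in Hphi; [exact Hphi|].
  apply HTD. right. reflexivity.
Qed.
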